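(* Let $\omega_2\in\mathbb{D}$, $\omega_1,\omega_4\in\overline{\mathbb{D}}$, $\alpha_1,\alpha_2,\alpha_3,\beta_1,\beta_2,\gamma\in\mathbb{C}$, and $$T=\begin{pmatrix}\omega_1&\alpha_1&\beta_1&\gamma\\0&\omega_2&\alpha_2&\beta_2\\0&0&0&\alpha_3\\0&0&0&\omega_4\end{pmatrix}\in\mathcal{M}_4(\mathbb{C}).$$ Write $\delta_i=1-|\omega_i|^2$ for $i=1,2,4$. Then $T$ is a contraction on $\mathbb{C}^4$ if and only if one of the following holds: (A) $|\alpha_1|^2\le\delta_1\delta_2$, $|\alpha_3|^2\le\delta_4$, $|\alpha_2|^2=\delta_2$, $\beta_1=-\dfrac{\alpha_1\alpha_2\overline{\omega_2}}{\delta_2}$, $\beta_2=0$, and $$|\gamma|^2\delta_2\le(\delta_1\delta_2-|\alpha_1|^2)(\delta_4-|\alpha_3|^2);$$ (B) $|\alpha_1|^2\le\delta_1\delta_2$, $|\alpha_3|^2\le\delta_4$, $|\alpha_2|^2<\delta_2$, $$|\beta_1\delta_2+\alpha_1\alpha_2\overline{\omega_2}|^2\le(\delta_1\delta_2-|\alpha_1|^2)(\delta_2-|\alpha_2|^2),\qquad |\beta_2|^2\le(\delta_2-|\alpha_2|^2)(\delta_4-|\alpha_3|^2),$$ and $$\big|\gamma(\delta_2-|\alpha_2|^2)+\beta_2(\overline{\omega_2}\alpha_1+\overline{\alpha_2}\beta_1)\big|^2\delta_2\le\Big[(\delta_1\delta_2-|\alpha_1|^2)(\delta_2-|\alpha_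2|^2)-|\beta_1\delta_2+\alpha_1\alpha_2\overline{\omega_2}|^2\Big]\cdot\Big[(\delta_2-|\alpha_2|^2)(\delta_4-|\alpha_3|^2)-|\beta_2|^2\Big].$$
   Context: $\mathbb{D}$ denotes the open unit disk in $\mathbb{C}$ and $\overline{\mathbb{D}}$ the closed unit disk. $\mathbb{C}^4$ carries its standard inner product, and a matrix $T$ is a contraction if its Euclidean operator norm satisfies $\|T\|\le1$. $\overline{z}$ denotes complex conjugation. *)

From mathcomp Require Import all_boot all_algebra.
From mathcomp Require Import complex.
From mathcomp Require Import reals.
Import GRing.Theory Num.Theory.
Set Implicit Arguments. Unset Strict Implicit. Unset Printing Implicit Defensive.
Local Open Scope ring_scope.

Definition vnorm2 (C : numClosedFieldType) (n : nat) (x : 'cV[C]_n) : C :=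
  \sum_(i < n) `|x i 0| ^+ 2.

Definition contraction (C : numClosedFieldType) (n : nat) (T : 'M[C]_n) : Prop :=
  forall x : 'cV[C]_n, vnorm2 (T *m x) <= vnorm2 x.

Definition Tmat (C : numClosedFieldType) (w1 w2 w4 a1 a2 a3 b1 b2 g : C) : 'M[C]_4 :=
  \matrix_(i < 4, j < 4)
    nth 0 (nth [::] [:: [:: w1; a1; b1; g];
                        [:: 0 ; w2; a2; b2];
                        [:: 0 ; 0 ; 0 ; a3];
                        [:: 0 ; 0 ; 0 ; w4]] i) j.

From mathcomp Require Import all_boot all_order all_algebra ring.
From mathcomp Require Import complex reals.
Import Order.TTheory GRing.Theory Num.Theory.

Set Implicit Arguments.
Unset Strict Implicit.
Unset Printing Implicit Defensive.
Local Open Scope ring_scope.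

(* The defect |x|^2 - |T x|^2 is a Hermitian form in the coordinates x1, ..., x4,
   and the variables are eliminated one at a time with the Schur-complement criterion:
   for a >= 0, a |t|^2 - 2 Re (t^* b) + q is nonnegative for all t iff q >= 0 and
   |b|^2 <= a q.  Nonnegativity in x1 is equivalent to that of the form
   d1 |y1|^2 - 2 Re (y1^* u) + q in a fresh variable y1, which removes w1.  After x2 is
   eliminated, the coefficient of |x3|^2 is d2 - |a2|^2.  If it vanishes, the x3-linear
   term must vanish too, and what is left is a binary form in (y1, x4) whose
   nonnegativity is (A); if it is positive, one more Schur complement leaves a binary
   form in (y1, x4) whose nonnegativity is (B). *)

(* [/=] folds the bundled morphisms produced by [rmorphM] & co. back into [_^*]. *)
Ltac push_conj :=
  rewrite ?normCK ?(rmorphD, rmorphB, rmorphN, rmorphM, rmorph1, rmorph0, fmorphV) /=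
          ?conjCK.

Definition col4 (R : nmodType) (x1 x2 x3 x4 : R) : 'cV[R]_4 :=
  \col_(i < 4) [:: x1; x2; x3; x4]`_i.

Lemma cV4_forall (R : nmodType) (P : 'cV[R]_4 -> Prop) :
  (forall x, P x) <-> (forall x1 x2 x3 x4, P (col4 x1 x2 x3 x4)).
Proof.
split=> [H * | H x]; first exact: H.
suff -> : x = col4 (x (inord 0) 0) (x (inord 1) 0) (x (inord 2) 0) (x (inord 3) 0)
  by exact: H.
apply/matrixP => i j; rewrite !mxE ord1.
by case: i => -[|[|[|[|//]]]] i_lt; congr (x _ _); apply: val_inj; rewrite /= inordK.
Qed.

Section HermitianQuadratic.
Variable C : numClosedFieldType.

Definition hquad (a b q t : C) : C := a * `|t| ^+ 2 - (t^* * b + t * b^*) + q.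

Lemma hquad0_ge0P (b q : C) :
  (forall t, 0 <= hquad 0 b q t) <-> 0 <= q /\ b = 0.
Proof.
split=> [H | [q_ge0 -> t]].
  2: by rewrite [hquad _ _ _ _](_ : _ = q) // /hquad; push_conj; ring.
have q_ge0 : 0 <= q.
  by have := H 0; have -> : hquad 0 b q 0 = q by rewrite /hquad; push_conj; ring.
split=> //; have [//|b_neq0] := eqVneq b 0.
have := H ((q + 1) / b^*); rewrite [hquad _ _ _ _](_ : _ = - (q + 2%:R)).
  by rewrite oppr_ge0 => /(lt_le_trans (ltr_wpDl q_ge0 (ltr0Sn _ 1))); rewrite ltxx.
rewrite /hquad; push_conj; rewrite (geC0_conj q_ge0).
by field; rewrite conjC_eq0 b_neq0.
Qed.

Lemma hquad_complete_square (a b q t : C) : 0 <= a ->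
  a * hquad a b q t = `|a * t - b| ^+ 2 + (a * q - `|b| ^+ 2).
Proof. by move=> a_ge0; rewrite /hquad; push_conj; rewrite (geC0_conj a_ge0); ring. Qed.

Lemma hquad_ge0P_pos (a b q : C) : 0 < a ->
  (forall t, 0 <= hquad a b q t) <-> `|b| ^+ 2 <= a * q.
Proof.
move=> a_gt0; have a_ge0 := ltW a_gt0.
rewrite -subr_ge0; split=> [H | ab_le t].
  have := H (b / a).
  rewrite -[0 <= hquad _ _ _ _](pmulr_rge0 _ a_gt0) hquad_complete_square //.
  by rewrite [a * _]mulrC divfK ?lt0r_neq0 // subrr normr0 expr0n add0r.
by rewrite -(pmulr_rge0 _ a_gt0) hquad_complete_square // addr_ge0 ?exprn_ge0.
Qed.

Lemma hquad_ge0P (a b q : C) : 0 <= a ->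
  (forall t, 0 <= hquad a b q t) <-> 0 <= q /\ `|b| ^+ 2 <= a * q.
Proof.
rewrite le_eqVlt => /predU1P[<- | a_gt0].
  rewrite hquad0_ge0P mul0r -normrX normr_le0 expf_eq0 /=.
  by split=> -[? /eqP].
rewrite hquad_ge0P_pos //; split=> [ab_le | []//].
split=> //; rewrite -(pmulr_rge0 _ a_gt0); exact: le_trans (exprn_ge0 _ (normr_ge0 b)) ab_le.
Qed.

Lemma hquad_ge0_absorb (c u p : C) : `|c| <= 1 ->
  (forall t, 0 <= hquad (1 - `|c| ^+ 2) (c^* * u) (p - `|u| ^+ 2) t) <->
  (forall t, 0 <= hquad (1 - `|c| ^+ 2) u p t).
Proof.
move=> c_le1; have d_ge0 : 0 <= 1 - `|c| ^+ 2 by rewrite subr_ge0 exprn_ile1.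
have defect : (1 - `|c| ^+ 2) * (p - `|u| ^+ 2) - `|c^* * u| ^+ 2
              = (1 - `|c| ^+ 2) * p - `|u| ^+ 2 by push_conj; ring.
rewrite !hquad_ge0P // -[`|c^* * u| ^+ 2 <= _]subr_ge0 defect !subr_ge0.
have u_ge0 := exprn_ge0 2 (normr_ge0 u).
split=> -[pu_ge uc_le]; split=> //; first exact: le_trans u_ge0 pu_ge.
by apply: le_trans uc_le _; rewrite ler_piMl // lerBlDr lerDl exprn_ge0.
Qed.

Lemma hquad_binary_ge0P (a r k m : C) : 0 < r ->
  (forall y x, 0 <= hquad a (r * k * x) (r * m * `|x| ^+ 2) y) <->
  [/\ 0 <= a, 0 <= m & `|k| ^+ 2 * r <= a * m].
Proof.
move=> r_gt0; have r_ge0 := ltW r_gt0.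
have normE (x : C) : `|r * k * x| ^+ 2 = `|k| ^+ 2 * r * (r * `|x| ^+ 2).
  by push_conj; rewrite (geC0_conj r_ge0); ring.
have scaleE (x : C) : a * (r * m * `|x| ^+ 2) = a * m * (r * `|x| ^+ 2) by ring.
split=> [H | [a_ge0 m_ge0 km_le] y x].
  have a_ge0 : 0 <= a.
    by have := H 1 0; have -> : hquad a (r * k * 0) (r * m * `|0 : C| ^+ 2) 1 = a
      by rewrite /hquad; push_conj; ring.
  have /(hquad_ge0P _ _ a_ge0)[] := H^~ 1.
  rewrite normE scaleE normr1 expr1n !mulr1 ler_pM2r // => rm_ge0 km_le.
  by split; rewrite // -(pmulr_rge0 _ r_gt0).
move: y; apply/(hquad_ge0P _ _ a_ge0); rewrite normE scaleE.
by split; [rewrite !mulr_ge0 ?exprn_ge0 | rewrite ler_wpM2r ?mulr_ge0 ?exprn_ge0].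
Qed.
End HermitianQuadratic.

Section UpperTriangular4.
Variable C : numClosedFieldType.
Variables w1 w2 w4 a1 a2 a3 b1 b2 g : C.

Local Notation T := (Tmat w1 w2 w4 a1 a2 a3 b1 b2 g).
Local Notation d1 := (1 - `|w1| ^+ 2).
Local Notation d2 := (1 - `|w2| ^+ 2).
Local Notation d4 := (1 - `|w4| ^+ 2).
Local Notation s1 := (d1 * d2 - `|a1| ^+ 2).
Local Notation s2 := (d2 - `|a2| ^+ 2).
Local Notation s4 := (d4 - `|a3| ^+ 2).
Local Notation beta := (b1 * d2 + a1 * a2 * w2^*).
Local Notation gamma := (g * s2 + b2 * (w2^* * a1 + a2^* * b1)).
Local Notation e1 := (s1 * s2 - `|beta| ^+ 2).
Local Notation e2 := (s2 * s4 - `|b2| ^+ 2).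

(* For k = 1, 2, 3, [hquad _ (u_k ..) (q_k ..) x_k] is the form in x_k that remains once
   x_1, ..., x_(k-1) are eliminated, with x_1 replaced by the y1 of [hquad_ge0_absorb]. *)
Definition u1 x2 x3 x4 := a1 * x2 + b1 * x3 + g * x4.
Definition q1 x2 x3 x4 :=
  `|x2| ^+ 2 + `|x3| ^+ 2 + s4 * `|x4| ^+ 2 - `|w2 * x2 + a2 * x3 + b2 * x4| ^+ 2.
Definition u2 y1 x3 x4 := a1^* * y1 + w2^* * (a2 * x3 + b2 * x4).
Definition q2 y1 x3 x4 :=
  hquad d1 (b1 * x3 + g * x4)
    (`|x3| ^+ 2 + s4 * `|x4| ^+ 2 - `|a2 * x3 + b2 * x4| ^+ 2) y1.
Definition u3 y1 x4 := beta^* * y1 + a2^* * b2 * x4.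
Definition q3 y1 x4 :=
  hquad s1 ((d2 * g + a1 * w2^* * b2) * x4) ((d2 * s4 - `|b2| ^+ 2) * `|x4| ^+ 2) y1.

Lemma defect_col4 x1 x2 x3 x4 (x := col4 x1 x2 x3 x4) :
  vnorm2 x - vnorm2 (T *m x) =
  hquad d1 (w1^* * u1 x2 x3 x4) (q1 x2 x3 x4 - `|u1 x2 x3 x4| ^+ 2) x1.
Proof.
rewrite /x /vnorm2 !big_ord_recr !big_ord0 /= !mxE !big_ord_recr !big_ord0 /= !mxE /=.
by rewrite /hquad /u1 /q1; push_conj; ring.
Qed.

Lemma form_x2 y1 x2 x3 x4 :
  hquad d1 (u1 x2 x3 x4) (q1 x2 x3 x4) y1 = hquad d2 (u2 y1 x3 x4) (q2 y1 x3 x4) x2.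
Proof. by rewrite /u1 /q1 /u2 /q2 /hquad; push_conj; ring. Qed.

Lemma schur_x2 y1 x3 x4 :
  d2 * q2 y1 x3 x4 - `|u2 y1 x3 x4| ^+ 2 = hquad s2 (u3 y1 x4) (q3 y1 x4) x3.
Proof. by rewrite /u2 /q2 /u3 /q3 /hquad; push_conj; ring. Qed.

Lemma schur_x3 y1 x4 :
  s2 * q3 y1 x4 - `|u3 y1 x4| ^+ 2 = hquad e1 (d2 * gamma * x4) (d2 * e2 * `|x4| ^+ 2) y1.
Proof. by rewrite /u3 /q3 /hquad; push_conj; ring. Qed.

Lemma contraction_hquad :
  contraction T <-> forall x1 x2 x3 x4,
    0 <= hquad d1 (w1^* * u1 x2 x3 x4) (q1 x2 x3 x4 - `|u1 x2 x3 x4| ^+ 2) x1.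
Proof.
split=> [H x1 x2 x3 x4 | H]; first by rewrite -defect_col4 subr_ge0.
by apply/cV4_forall => x1 x2 x3 x4; rewrite -subr_ge0 defect_col4.
Qed.

Hypothesis w1_le1 : `|w1| <= 1.
Hypothesis w2_lt1 : `|w2| < 1.

Lemma d2_gt0 : 0 < d2. Proof. by rewrite subr_gt0 exprn_ilt1. Qed.

Lemma eliminate_x1 :
  contraction T <-> forall y1 x2 x3 x4, 0 <= hquad d1 (u1 x2 x3 x4) (q1 x2 x3 x4) y1.
Proof.
rewrite contraction_hquad.
by split=> H y1 x2 x3 x4; move: y1; apply/(hquad_ge0_absorb _ _ w1_le1) => t; exact: H.
Qed.

Lemma eliminate_x2 :
  (forall y1 x2 x3 x4, 0 <= hquad d1 (u1 x2 x3 x4) (q1 x2 x3 x4) y1) <->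
  (forall y1 x4 x3, 0 <= hquad s2 (u3 y1 x4) (q3 y1 x4) x3).
Proof.
have elim_x2 y1 x3 x4 :
    (forall x2, 0 <= hquad d2 (u2 y1 x3 x4) (q2 y1 x3 x4) x2) <->
    0 <= hquad s2 (u3 y1 x4) (q3 y1 x4) x3.
  by rewrite hquad_ge0P_pos ?d2_gt0 // -subr_ge0 schur_x2.
split=> H y1.
  by move=> x4 x3; apply/elim_x2 => x2; rewrite -form_x2.
by move=> x2 x3 x4; rewrite form_x2; move: x2; apply/elim_x2.
Qed.

Lemma eliminate_x3_degenerate : `|a2| ^+ 2 = d2 ->
  (forall y1 x4 x3, 0 <= hquad s2 (u3 y1 x4) (q3 y1 x4) x3) <->
  [/\ 0 <= s1, 0 <= s4, beta = 0, b2 = 0 & `|g| ^+ 2 * d2 <= s1 * s4].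
Proof.
move=> a2E; rewrite a2E subrr.
have a2_neq0 : a2 != 0.
  by have := lt0r_neq0 d2_gt0; rewrite -a2E expf_eq0 /= normr_eq0.
have u3_eq0 : (forall y1 x4, u3 y1 x4 = 0) <-> beta = 0 /\ b2 = 0.
  split=> [u3_0 | [beta0 b20 y1 x4]].
    2: by rewrite /u3 beta0 b20 rmorph0 !(mulr0, mul0r, addr0).
  have := u3_0 1 0; have := u3_0 0 1; rewrite /u3 !(mulr0, mulr1, mul0r, addr0, add0r).
  move=> /eqP; rewrite mulf_eq0 conjC_eq0 (negPf a2_neq0) => /eqP ->.
  by move=> /eqP; rewrite conjC_eq0 => /eqP.
have split_form : (forall y1 x4 x3, 0 <= hquad 0 (u3 y1 x4) (q3 y1 x4) x3) <->
    (forall y1 x4 : C, 0 <= q3 y1 x4) /\ (forall y1 x4, u3 y1 x4 = 0).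
  split=> [H | [q3_ge0 u3_0] y1 x4]; last exact/hquad0_ge0P.
  by split=> y1 x4; have /hquad0_ge0P[] := H y1 x4.
have q3E (b20 : b2 = 0) (y1 x4 : C) :
    q3 y1 x4 = hquad s1 (d2 * g * x4) (d2 * s4 * `|x4| ^+ 2) y1.
  by rewrite /q3 b20 normr0 expr0n /= subr0 mulr0 addr0.
rewrite split_form u3_eq0.
split=> [[q3_ge0 [beta0 b20]] | [s1_ge0 s4_ge0 beta0 b20 g_le]].
  have /(hquad_binary_ge0P _ _ _ d2_gt0)[] // : forall y1 x4,
      0 <= hquad s1 (d2 * g * x4) (d2 * s4 * `|x4| ^+ 2) y1.
    by move=> y1 x4; rewrite -q3E.
split=> [y1 x4 | //]; rewrite q3E //; move: y1 x4.
exact/(hquad_binary_ge0P _ _ _ d2_gt0).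
Qed.

Lemma eliminate_x3 : `|a2| ^+ 2 < d2 ->
  (forall y1 x4 x3, 0 <= hquad s2 (u3 y1 x4) (q3 y1 x4) x3) <->
  [/\ 0 <= e1, 0 <= e2 & `|gamma| ^+ 2 * d2 <= e1 * e2].
Proof.
rewrite -subr_gt0 => s2_gt0; rewrite -(hquad_binary_ge0P _ _ _ d2_gt0).
split=> H y1 x4; first by rewrite -schur_x3 subr_ge0 -hquad_ge0P_pos.
by apply/(hquad_ge0P_pos _ _ s2_gt0); rewrite -subr_ge0 schur_x3.
Qed.

Lemma contraction_TmatP :
  contraction T <->
  (`|a1| ^+ 2 <= d1 * d2 /\ `|a3| ^+ 2 <= d4 /\ `|a2| ^+ 2 = d2 /\
   b1 = - (a1 * a2 * w2^*) / d2 /\ b2 = 0 /\ `|g| ^+ 2 * d2 <= s1 * s4)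
  \/
  (`|a1| ^+ 2 <= d1 * d2 /\ `|a3| ^+ 2 <= d4 /\ `|a2| ^+ 2 < d2 /\
   `|beta| ^+ 2 <= s1 * s2 /\ `|b2| ^+ 2 <= s2 * s4 /\ `|gamma| ^+ 2 * d2 <= e1 * e2).
Proof.
have d2_neq0 := lt0r_neq0 d2_gt0.
rewrite eliminate_x1 eliminate_x2; split=> [H | ].
  have : 0 <= s2.
    have := H 0 0 1; rewrite [hquad _ _ _ _](_ : _ = s2) //.
    by rewrite /u3 /q3 /hquad; push_conj; ring.
  rewrite subr_ge0 le_eqVlt => /predU1P[a2E | a2_lt].
    have [] := (eliminate_x3_degenerate a2E).1 H.
    rewrite !subr_ge0 => a1_le a3_le /eqP; rewrite addr_eq0 => /eqP b1E b20 g_le.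
    by left; rewrite -b1E mulfK //; repeat split.
  have [] := (eliminate_x3 a2_lt).1 H; rewrite !subr_ge0 => beta_le b2_le g_le.
  have s2_gt0 : 0 < s2 by rewrite subr_gt0.
  have s2_factor_ge0 x z : 0 <= z -> z <= x * s2 -> 0 <= x.
    by move=> z_ge0 le_z; rewrite -(pmulr_lge0 _ s2_gt0); exact: le_trans le_z.
  have sqr_ge0 (z : C) := exprn_ge0 2 (normr_ge0 z).
  right; split.
    by rewrite -subr_ge0; exact: s2_factor_ge0 (sqr_ge0 _) beta_le.
  split; first by rewrite -subr_ge0; apply: s2_factor_ge0 (sqr_ge0 b2) _; rewrite mulrC.
  by repeat split.
move=> [[s1_le [s4_le [a2E [b1E [b20 g_le]]]]] |
        [s1_le [s4_le [a2_lt [beta_le [b2_le g_le]]]]]].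
  apply/(eliminate_x3_degenerate a2E); split; rewrite ?subr_ge0 //.
  by rewrite b1E divfK // addNr.
by apply/(eliminate_x3 a2_lt); split; rewrite ?subr_ge0.
Qed.

End UpperTriangular4.

Theorem lemma2p2 (R : realType) (w1 w2 w4 a1 a2 a3 b1 b2 g : R[i]) :
  `|w2| < 1 -> `|w1| <= 1 -> `|w4| <= 1 ->
  let d1 := 1 - `|w1| ^+ 2 in
  let d2 := 1 - `|w2| ^+ 2 in
  let d4 := 1 - `|w4| ^+ 2 in
  contraction (Tmat w1 w2 w4 a1 a2 a3 b1 b2 g) <->
  ( (* (A) *)
    (`|a1| ^+ 2 <= d1 * d2 /\ `|a3| ^+ 2 <= d4 /\ `|a2| ^+ 2 = d2 /\
     b1 = - (a1 * a2 * w2^*) / d2 /\ b2 = 0 /\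
     `|g| ^+ 2 * d2 <= (d1 * d2 - `|a1| ^+ 2) * (d4 - `|a3| ^+ 2))
  \/
    (* (B) *)
    (`|a1| ^+ 2 <= d1 * d2 /\ `|a3| ^+ 2 <= d4 /\ `|a2| ^+ 2 < d2 /\
     `|b1 * d2 + a1 * a2 * w2^*| ^+ 2
        <= (d1 * d2 - `|a1| ^+ 2) * (d2 - `|a2| ^+ 2) /\
     `|b2| ^+ 2 <= (d2 - `|a2| ^+ 2) * (d4 - `|a3| ^+ 2) /\
     `|g * (d2 - `|a2| ^+ 2) + b2 * (w2^* * a1 + a2^* * b1)| ^+ 2 * d2
        <= ((d1 * d2 - `|a1| ^+ 2) * (d2 - `|a2| ^+ 2)
              - `|b1 * d2 + a1 * a2 * w2^*| ^+ 2)
           * ((d2 - `|a2| ^+ 2) * (d4 - `|a3| ^+ 2) - `|b2| ^+ 2)) ).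
Proof.
by move=> w2_lt1 w1_le1 _; exact: contraction_TmatP.
Qed.
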